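(* Let $((x_n,y_n))_{n\in\mathbb N}$ be a sequence in $[0,\infty)^2$ such that $\sum_n(x_n,y_n)$ converges, and let $k\in\mathbb N$. Write $E:=E(x_n,y_n)$. (a) Let $A:=\{n:\ x_n<x_k\}$. If $x_k>\sum_{n\in A}x_n$, then $(\sum_{n\in A}x_n,\,x_k)$ is an $x$-gap of $E$. (b) Let $A:=\{n:\ y_n<y_k\}$. If $y_k>\sum_{n\in A}y_n$, then $(\sum_{n\in A}y_n,\,y_k)$ is a $y$-gap of $E$. (c) Assume that $A:=\{n:\ x_n<x_k\}=\{n:\ y_n<y_k\}$. If $x_k>\sum_{n\in A}x_n$ and $y_k>\sum_{n\in A}y_n$, then $(\sum_{n\in A}x_n,\,x_k)\times(\sum_{n\in A}y_n,\,y_k)$ is a rectangular gap of $E$.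
   Context: $E(x_n,y_n):=\{\sum_{n\in B}(x_n,y_n):\ B\subset\mathbb N\}$ is the achievement set of the series. For $A\subset\mathbb R^2$ and reals $a<b$, $c<d$: the set $(a,b)\times(c,d)$ is a rectangular gap of $A$ if $([a,b]\times[c,d])\cap A=\{(a,c),(b,d)\}$; the interval $(a,b)$ is an $x$-gap of $A$ if there exist $c,d\in\mathbb R$ with $(a,c),(b,d)\in A$ and $((a,b)\times\mathbb R)\cap A=\emptyset$; the interval $(c,d)$ is a $y$-gap of $A$ if there exist $a,b\in\mathbb R$ with $(a,c),(b,d)\in A$ and $(\mathbb R\times(c,d))\cap A=\emptyset$. *)

From Stdlib Require Import Reals.
From Coquelicot Require Import Coquelicot.
Open Scope R_scope.

(* Subsets B of N are represented by their indicator B : nat -> bool. *)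
Definition restrict (B : nat -> bool) (u : nat -> R) : nat -> R :=
  fun n => if B n then u n else 0.

Definition achievement_set (x y : nat -> R) : R * R -> Prop :=
  fun p => exists B : nat -> bool,
    is_series (restrict B x) (fst p) /\ is_series (restrict B y) (snd p).

Definition sum_below (u : nat -> R) (k : nat) : R :=
  Series (fun n => if Rlt_dec (u n) (u k) then u n else 0).

Definition rect_gap (A : R * R -> Prop) (a b c d : R) : Prop :=
  a < b /\ c < d /\
  forall p : R * R,
    ((a <= fst p <= b /\ c <= snd p <= d) /\ A p) <-> (p = (a, c) \/ p = (b, d)).

Definition x_gap (A : R * R -> Prop) (a b : R) : Prop :=
  a < b /\ (exists c d : R, A (a, c) /\ A (b, d)) /\
  (forall p : R * R, A p -> ~ (a < fst p < b)).

Definition y_gap (A : R * R -> Prop) (c d : R) : Prop :=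
  c < d /\ (exists a b : R, A (a, c) /\ A (b, d)) /\
  (forall p : R * R, A p -> ~ (c < snd p < d)).

(* A subsum either contains some index n with u n >= u k, and then it is at
   least u k, or it only uses indices with u n < u k, and then it is at most
   sum_below u k.  So no subsum lies strictly between the two, while both
   endpoints are attained (by the index set {n | u n < u k} and by {k}).  In
   the rectangular case the two sets of "small" indices coincide, so the same
   alternative holds in both coordinates at once. *)

From Stdlib Require Import Reals Lra Classical.
From Coquelicot Require Import Coquelicot.
Open Scope R_scope.

Lemma is_series_zero : is_series (fun _ : nat => 0) 0.
Proof.
  apply (filterlim_ext (fun _ => 0)); [|apply filterlim_const].
  intro n. symmetry. apply (sum_n_m_const_zero (G := R_AbelianMonoid)).
Qed.

Lemma is_series_indicator (c : R) (k : nat) :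
  is_series (fun n => if Nat.eqb n k then c else 0) c.
Proof.
  induction k as [|k IHk]; apply is_series_decr_1; simpl.
  - match goal with |- is_series _ ?l => replace l with 0 end.
    + exact is_series_zero.
    + unfold plus, opp; simpl; ring.
  - match goal with |- is_series _ ?l => replace l with c end.
    + exact IHk.
    + unfold plus, opp; simpl; ring.
Qed.

Lemma is_series_restrict_single (u : nat -> R) (k : nat) :
  is_series (restrict (fun n => Nat.eqb n k) u) (u k).
Proof.
  apply (is_series_ext (fun n => if Nat.eqb n k then u k else 0)).
  - intro n. unfold restrict. destruct (Nat.eqb_spec n k) as [->|]; reflexivity.
  - apply is_series_indicator.
Qed.

Definition below (u : nat -> R) (k : nat) (n : nat) : bool :=
  if Rlt_dec (u n) (u k) then true else false.

Lemma below_spec (u : nat -> R) (k n : nat) : below u k n = true <-> u n < u k.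
Proof. unfold below. destruct Rlt_dec; split; congruence || tauto. Qed.

Lemma sum_below_restrict (u : nat -> R) (k : nat) :
  sum_below u k = Series (restrict (below u k) u).
Proof.
  unfold sum_below, restrict, below.
  apply Series_ext; intro n. destruct Rlt_dec; reflexivity.
Qed.

Lemma subset_below_or_exists_ge (B : nat -> bool) (u : nat -> R) (k : nat) :
  (forall n, B n = true -> u n < u k) \/ (exists n, B n = true /\ u k <= u n).
Proof.
  destruct (classic (exists n, B n = true /\ u k <= u n)) as [H|H]; [now right|left].
  intros n Bn. apply Rnot_le_lt. intro Hkn. apply H. now exists n.
Qed.

Section NonnegSeries.

Variable u : nat -> R.
Hypothesis u_nonneg : forall n, 0 <= u n.
Hypothesis u_summable : ex_series u.

Lemma restrict_nonneg (B : nat -> bool) (n : nat) : 0 <= restrict B u n.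
Proof. unfold restrict. destruct (B n); [apply u_nonneg | lra]. Qed.

Lemma ex_series_restrict (B : nat -> bool) : ex_series (restrict B u).
Proof.
  apply (@ex_series_le R_AbsRing R_CompleteNormedModule _ u); [|exact u_summable].
  intro n. change (Rabs (restrict B u n) <= u n).
  rewrite Rabs_right by (apply Rle_ge, restrict_nonneg).
  unfold restrict. destruct (B n); [lra | apply u_nonneg].
Qed.

Lemma Series_restrict_le (B C : nat -> bool) :
  (forall n, B n = true -> C n = true) ->
  Series (restrict B u) <= Series (restrict C u).
Proof.
  intro HBC. apply Series_le; [|apply ex_series_restrict].
  intro n. split; [apply restrict_nonneg|].
  unfold restrict. destruct (B n) eqn:Bn.
  - rewrite (HBC n Bn). lra.
  - destruct (C n); [apply u_nonneg | lra].
Qed.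

Lemma Series_restrict_ge_term (B : nat -> bool) (n : nat) :
  B n = true -> u n <= Series (restrict B u).
Proof.
  intro Bn.
  rewrite <- (is_series_unique _ _ (is_series_restrict_single u n)).
  apply Series_restrict_le. intro m. destruct (Nat.eqb_spec m n) as [->|]; congruence.
Qed.

Lemma Series_restrict_subset_below (B : nat -> bool) (k : nat) :
  (forall n, B n = true -> u n < u k) -> Series (restrict B u) <= sum_below u k.
Proof.
  intro HB. rewrite sum_below_restrict. apply Series_restrict_le.
  intros n Bn. now apply below_spec, HB.
Qed.

Lemma Series_restrict_not_in_gap (B : nat -> bool) (k : nat) :
  ~ (sum_below u k < Series (restrict B u) < u k).
Proof.
  destruct (subset_below_or_exists_ge B u k) as [HB | [n [Bn Hn]]].
  - pose proof (Series_restrict_subset_below B k HB). lra.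
  - pose proof (Series_restrict_ge_term B n Bn). lra.
Qed.

End NonnegSeries.

Section AchievementSet.

Variables x y : nat -> R.

Lemma achievement_set_term (k : nat) : achievement_set x y (x k, y k).
Proof. exists (fun n => Nat.eqb n k). split; apply is_series_restrict_single. Qed.

Lemma achievement_set_swap (p : R * R) :
  achievement_set x y p -> achievement_set y x (snd p, fst p).
Proof. intros [B [Hx Hy]]. now exists B. Qed.

Hypothesis x_nonneg : forall n, 0 <= x n.
Hypothesis y_nonneg : forall n, 0 <= y n.
Hypothesis x_summable : ex_series x.
Hypothesis y_summable : ex_series y.

Lemma achievement_set_restrict (B : nat -> bool) :
  achievement_set x y (Series (restrict B x), Series (restrict B y)).
Proof. exists B. split; apply Series_correct, ex_series_restrict; assumption. Qed.

Lemma achievement_set_inv (p : R * R) :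
  achievement_set x y p ->
  exists B, p = (Series (restrict B x), Series (restrict B y)).
Proof.
  intros [B [Hx Hy]]. exists B.
  rewrite (is_series_unique _ _ Hx), (is_series_unique _ _ Hy). now destruct p.
Qed.

Lemma x_gap_sum_below (k : nat) :
  sum_below x k < x k -> x_gap (achievement_set x y) (sum_below x k) (x k).
Proof.
  intro Hk. split; [exact Hk | split].
  - exists (Series (restrict (below x k) y)), (y k). split.
    + rewrite sum_below_restrict. apply achievement_set_restrict.
    + apply achievement_set_term.
  - intros p Hp. destruct (achievement_set_inv p Hp) as [B ->].
    now apply Series_restrict_not_in_gap.
Qed.

Lemma rect_gap_sum_below (k : nat) :
  (forall n, x n < x k <-> y n < y k) ->
  sum_below x k < x k -> sum_below y k < y k ->
  rect_gap (achievement_set x y) (sum_below x k) (x k) (sum_below y k) (y k).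
Proof.
  intros Hsame Hxk Hyk. split; [exact Hxk | split; [exact Hyk |]].
  intro p. split.
  - intros [[[Hx1 Hx2] [Hy1 Hy2]] Hp].
    destruct (achievement_set_inv p Hp) as [B ->]; simpl in *.
    destruct (subset_below_or_exists_ge B x k) as [HB | [n [Bn Hn]]].
    + left. pose proof (Series_restrict_subset_below x x_nonneg x_summable B k HB).
      assert (HBy : forall n, B n = true -> y n < y k) by (intros n Bn; now apply Hsame, HB).
      pose proof (Series_restrict_subset_below y y_nonneg y_summable B k HBy).
      f_equal; lra.
    + right. pose proof (Series_restrict_ge_term x x_nonneg x_summable B n Bn).
      assert (Hyn : y k <= y n) by (apply Rnot_lt_le; rewrite <- Hsame; lra).
      pose proof (Series_restrict_ge_term y y_nonneg y_summable B n Bn).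
      f_equal; lra.
  - intros [-> | ->]; (split; [simpl; lra |]).
    + rewrite !sum_below_restrict.
      rewrite (Series_ext (restrict (below y k) y) (restrict (below x k) y)).
      * apply achievement_set_restrict.
      * intro n. unfold restrict.
        replace (below y k n) with (below x k n); [reflexivity|].
        apply Bool.eq_true_iff_eq. rewrite !below_spec. apply Hsame.
    + apply achievement_set_term.
Qed.

End AchievementSet.

Lemma y_gap_of_x_gap_swap (x y : nat -> R) (c d : R) :
  x_gap (achievement_set y x) c d -> y_gap (achievement_set x y) c d.
Proof.
  intros [Hcd [[a [b [Ha Hb]]] Hgap]]. split; [exact Hcd | split].
  - exists a, b. split; apply (achievement_set_swap y x (_, _)); assumption.
  - intros p Hp. apply (Hgap (snd p, fst p)), achievement_set_swap, Hp.
Qed.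

Theorem mainTheorem16 (x y : nat -> R) (k : nat)
  (hx0 : forall n, 0 <= x n) (hy0 : forall n, 0 <= y n)
  (hxc : ex_series x) (hyc : ex_series y) :
  (x k > sum_below x k ->
     x_gap (achievement_set x y) (sum_below x k) (x k)) /\
  (y k > sum_below y k ->
     y_gap (achievement_set x y) (sum_below y k) (y k)) /\
  ((forall n, x n < x k <-> y n < y k) ->
   x k > sum_below x k -> y k > sum_below y k ->
     rect_gap (achievement_set x y) (sum_below x k) (x k) (sum_below y k) (y k)).
Proof.
  split; [|split].
  - apply x_gap_sum_below; assumption.
  - intro Hk. apply y_gap_of_x_gap_swap, x_gap_sum_below; assumption.
  - apply rect_gap_sum_below; assumption.
Qed.
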